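(* For every positive integer $d$ there is a constant $C_d$ such that for every positive integer $n$, every subposet of the $\mathbf{n^{d+1}}$-grid whose dimension is at most $d$ has at most $C_d n^d$ elements.
   Context: $[n]$ denotes $\{0,1,\ldots,n-1\}$. The $\mathbf{n^{k}}$-grid is the poset on $[n]^{k}$ with the product order: $(x_1,\ldots,x_k)\le(y_1,\ldots,y_k)$ iff $x_i\le y_i$ for all $i$. A subposet is a subset with the induced order. The dimension of a poset $P$ is the least integer $d$ such that there are $d$ linear extensions of $P$ whose intersection is $P$. *)

From mathcomp Require Import all_boot.
Set Implicit Arguments. Unset Strict Implicit. Unset Printing Implicit Defensive.

Definition gridpt (k n : nat) := {ffun 'I_k -> 'I_n}.

Definition grid_le (k n : nat) (x y : gridpt k n) : bool :=
  [forall i, (x i <= y i)%N].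

Definition linear_extension (k n : nat) (S : {set gridpt k n})
    (L : rel (gridpt k n)) : Prop :=
  [/\ (forall x, x \in S -> L x x),
      (forall x y, x \in S -> y \in S -> L x y -> L y x -> x = y),
      (forall x y z, x \in S -> y \in S -> z \in S -> L x y -> L y z -> L x z),
      (forall x y, x \in S -> y \in S -> L x y || L y x)
    & (forall x y, x \in S -> y \in S -> grid_le x y -> L x y)].

Definition dim_le (k n : nat) (S : {set gridpt k n}) (d : nat) : Prop :=
  exists d' : nat, (d' <= d)%N /\
  exists Ls : 'I_d' -> rel (gridpt k n),
    (forall j, linear_extension S (Ls j)) /\
    (forall x y, x \in S -> y \in S ->
       (grid_le x y <-> forall j, Ls j x y)).

From mathcomp Require Import all_boot.
Set Implicit Arguments. Unset Strict Implicit. Unset Printing Implicit Defensive.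

(* A subposet of dimension at most d cannot contain the standard example
   S_(d+1) (points a_i, b_i with a_i <= b_j iff i <> j): every pair (a_i, b_i)
   must be reversed by some linear extension, and no extension reverses two of
   them.  A copy of S_(d+1) in the grid is an occurrence of a fixed
   (d+1)-dimensional pattern, and sets avoiding a fixed pattern have O(n^d)
   points, by a Marcus-Tardos style induction: cut the grid into cubes of side
   b; a cube whose points take fewer than m offsets in each coordinate holds at
   most (m-1)^(d+1) points, while the cubes taking at least m offsets in
   direction i, grouped by their i-th coordinate and offset set, project
   injectively onto d-dimensional sets avoiding the projected pattern. *)

Lemma sorted_enum_ord n (V : {set 'I_n}) : sorted (fun i j : 'I_n => i < j) (enum V).
Proof.
rewrite /enum_mem -enumT /=; apply: sorted_filter; first exact: ltn_trans.
by have := iota_ltn_sorted 0 n; rewrite -val_enum_ord sorted_map.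
Qed.

Lemma increasing_in_set n m (V : {set 'I_n}) : m <= #|V| ->
  exists2 K : 'I_m -> 'I_n, {homo K : j j' / j < j'} & forall j, K j \in V.
Proof.
case: m => [|m] le_m.
  by exists (fun j : 'I_0 => False_rect _ (notF (ltn_ord j))) => [[]|[]].
have [x0 _] : {x0 | x0 \in V} by apply/sigW/set0Pn; rewrite -card_gt0 (leq_trans _ le_m).
have in_enum (j : 'I_m.+1) : j < size (enum V) by rewrite -cardE (leq_trans (ltn_ord j) le_m).
exists (fun j => nth x0 (enum V) j) => [j j' hj|j]; last by rewrite -mem_enum mem_nth.
have lt_trans : transitive (fun i j : 'I_n => i < j) by move=> ? ? ?; exact: ltn_trans.
by apply: (sorted_ltn_nth lt_trans x0 (sorted_enum_ord V)); rewrite ?inE ?in_enum.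
Qed.

Lemma card_bigcup_le (I T : finType) (P : pred I) (F : I -> {set T}) :
  #|\bigcup_(i | P i) F i| <= \sum_(i | P i) #|F i|.
Proof.
elim/big_rec2: _ => [|i A n _ hA]; first by rewrite cards0.
by apply: leq_trans (leq_card_setU _ _) _; rewrite leq_add2l.
Qed.

Section Patterns.
Variables (P : finType) (m : nat).

(* Only the strict inequalities of the pattern must be realised; ties impose nothing. *)
Definition contains_pattern k n (S : {set gridpt k n}) (s : 'I_k -> P -> 'I_m) :=
  exists2 phi : P -> gridpt k n, (forall p, phi p \in S) &
    forall i p q, s i p < s i q -> phi p i < phi q i.

Lemma contains_pattern_imset k n n' (f : gridpt k n -> gridpt k n')
    (S : {set gridpt k n}) (s : 'I_k -> P -> 'I_m) :
  (forall x y i, f x i < f y i -> x i < y i) ->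
  contains_pattern (f @: S) s -> contains_pattern S s.
Proof.
move=> f_lt [phi phiS phi_lt].
have /fin_all_exists[psi psiP] : forall p, exists x, x \in S /\ f x = phi p.
  by move=> p; case/imsetP: (phiS p) => x xS ->; exists x.
exists psi => [p | i p q lt_pq]; first by case: (psiP p).
by apply: f_lt; case: (psiP p) => _ ->; case: (psiP q) => _ ->; apply: phi_lt.
Qed.

Lemma card_avoiding_line n (S : {set gridpt 1 n}) (s : 'I_1 -> P -> 'I_m) :
  ~ contains_pattern S s -> #|S| <= m.
Proof.
move=> avoid; rewrite leqNgt; apply/negP => big; apply: avoid.
have coord_inj : injective (fun x : gridpt 1 n => x ord0).
  by move=> x y e; apply/ffunP => i; rewrite (ord1 i).
have [K K_lt KS] : exists2 K : 'I_m -> 'I_n, {homo K : j j' / j < j'} &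
    forall j, K j \in [set x ord0 | x : gridpt 1 n in S].
  by apply: increasing_in_set; rewrite card_imset // ltnW.
have /fin_all_exists[phi phiP] : forall p, exists x, x \in S /\ x ord0 = K (s ord0 p).
  by move=> p; case/imsetP: (KS (s ord0 p)) => x xS ->; exists x.
exists phi => [p | i p q]; first by case: (phiP p).
by rewrite (ord1 i) => lt_pq; case: (phiP p) => _ ->; case: (phiP q) => _ ->; apply: K_lt.
Qed.

End Patterns.

Section Blocks.
Variables (k b M : nat).
Hypothesis b_gt0 : 0 < b.

Lemma divn_ord_lt (c : 'I_(b * M)) : c %/ b < M.
Proof. by rewrite ltn_divLR // [M * b]mulnC. Qed.

Definition block (x : gridpt k (b * M)) : gridpt k M :=
  [ffun i => Ordinal (divn_ord_lt (x i))].
Definition offset (x : gridpt k (b * M)) : {ffun 'I_k -> 'I_b} :=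
  [ffun i => Ordinal (ltn_pmod (x i) b_gt0)].

Lemma block_offsetE (x : gridpt k (b * M)) i : (x i : nat) = block x i * b + offset x i.
Proof. by rewrite !ffunE /= -divn_eq. Qed.

Lemma block_offset_inj (x y : gridpt k (b * M)) :
  block x = block y -> offset x = offset y -> x = y.
Proof.
by move=> eB eO; apply/ffunP => i; apply: val_inj; rewrite /= !block_offsetE eB eO.
Qed.

Lemma ltn_block (x y : gridpt k (b * M)) i : block x i < block y i -> x i < y i.
Proof. by rewrite !ffunE; apply: contraTT; rewrite -!leqNgt; apply: leq_div2r. Qed.

Lemma ltn_offset (x y : gridpt k (b * M)) i :
  block x i = block y i -> offset x i < offset y i -> x i < y i.
Proof. by move=> eB lt_xy; rewrite !block_offsetE eB ltn_add2l. Qed.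

Variable S : {set gridpt k (b * M)}.

Definition fiber (B : gridpt k M) := [set x in S | block x == B].
Definition residues i (B : gridpt k M) : {set 'I_b} := [set offset x i | x in fiber B].

Lemma card_fiber (B : gridpt k M) : #|fiber B| <= \prod_i #|residues i B|.
Proof.
have offset_inj : {in fiber B &, injective offset}.
  move=> x y; rewrite !inE => /andP[_ /eqP xB] /andP[_ /eqP yB].
  by apply: block_offset_inj; rewrite xB yB.
rewrite -(card_in_imset offset_inj).
have /subset_leq_card : offset @: fiber B \subset family (fun i => mem (residues i B)).
  by apply/subsetP => _ /imsetP[x xB ->]; apply/familyP => i; apply: imset_f.
by rewrite card_family foldrE big_map big_enum.
Qed.

End Blocks.

Section Blowup.
Variables (P : finType) (m d b M : nat) (s : 'I_d.+2 -> P -> 'I_m).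
Hypothesis b_gt0 : 0 < b.
Variable Aproj : 'I_d.+2 -> nat.
Hypothesis Aproj_bound : forall (i : 'I_d.+2) (S' : {set gridpt d.+1 M}),
  ~ contains_pattern S' (fun l => s (lift i l)) -> #|S'| <= Aproj i * M ^ d.
Variable S : {set gridpt d.+2 (b * M)}.
Hypothesis S_avoids : ~ contains_pattern S s.

Local Notation block := (block b_gt0).
Local Notation offset := (offset b_gt0).
Local Notation fiber := (fiber b_gt0 S).
Local Notation residues := (residues b_gt0 S).

Lemma block_image_avoids : ~ contains_pattern (block @: S) s.
Proof. by move/(contains_pattern_imset (@ltn_block _ _ _ b_gt0)). Qed.

Definition proj i (B : gridpt d.+2 M) : gridpt d.+1 M := [ffun l => B (lift i l)].

Definition wide_class (i : 'I_d.+2) (c : 'I_M) (R : {set 'I_b}) :=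
  [set B in block @: S | [&& B i == c, residues i B == R & m <= #|R|]].

Lemma proj_wide_class_avoids i c (R : {set 'I_b}) : m <= #|R| ->
  ~ contains_pattern (proj i @: wide_class i c R) (fun l => s (lift i l)).
Proof.
move=> mR [phi phiW phi_lt]; apply: S_avoids.
have [K K_lt KR] := increasing_in_set mR.
have /fin_all_exists[psi psiP] : forall p, exists x,
    [/\ x \in S, block x i = c, proj i (block x) = phi p & offset x i = K (s i p)].
  move=> p; case/imsetP: (phiW p) => B; rewrite inE => /and4P[_ /eqP Bi /eqP RB _] ->.
  have /imsetP[x] : K (s i p) \in residues i B by rewrite RB KR.
  by rewrite inE => /andP[xS /eqP xB] ->; exists x; rewrite xB.
exists psi => [p | j p q]; first by case: (psiP p).
case: (psiP p) (psiP q) => _ ci_p proj_p off_p [_ ci_q proj_q off_q].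
case: (unliftP i j) => [l|] -> lt_pq.
  by apply: ltn_block; have := phi_lt l p q lt_pq; rewrite -proj_p -proj_q !ffunE.
by apply: ltn_offset; [rewrite ci_p ci_q | rewrite off_p off_q K_lt].
Qed.

Lemma card_wide_class i c (R : {set 'I_b}) : #|wide_class i c R| <= Aproj i * M ^ d.
Proof.
have [mR | Rm] := leqP m #|R|; last first.
  suff -> : wide_class i c R = set0 by rewrite cards0.
  by apply/setP => B; rewrite !inE leqNgt Rm !andbF.
have proj_inj : {in wide_class i c R &, injective (proj i)}.
  move=> B B'; rewrite !inE => /and4P[_ /eqP Bi _ _] /and4P[_ /eqP B'i _ _] eB.
  apply/ffunP => j; case: (unliftP i j) => [l|] ->; last by rewrite Bi B'i.
  by have := congr1 (fun B : gridpt d.+1 M => B l) eB; rewrite !ffunE.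
rewrite -(card_in_imset proj_inj); apply: Aproj_bound.
exact: proj_wide_class_avoids.
Qed.

Lemma card_wide (i : 'I_d.+2) :
  #|[set B in block @: S | m <= #|residues i B|]| <= 2 ^ b * Aproj i * M ^ d.+1.
Proof.
have cover : [set B in block @: S | m <= #|residues i B|] \subset
    \bigcup_(cR : 'I_M * {set 'I_b}) wide_class i cR.1 cR.2.
  apply/subsetP => B; rewrite inE => /andP[BS wB]; apply/bigcupP.
  by exists (B i, residues i B); rewrite // inE BS !eqxx wB.
apply: leq_trans (subset_leq_card cover) _; apply: leq_trans (card_bigcup_le _ _) _.
apply: (@leq_trans (\sum_(cR : 'I_M * {set 'I_b}) Aproj i * M ^ d)).
  by apply: leq_sum => cR _; apply: card_wide_class.
have card_sets : #|{set 'I_b}| = 2 ^ b.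
  by rewrite -cardsT -powersetT card_powerset cardsT card_ord.
rewrite sum_nat_const card_prod card_ord card_sets expnS.
by rewrite -!mulnA mulnCA [Aproj i * (M * _)]mulnCA.
Qed.

Lemma card_blowup : #|S| <=
  (m.-1) ^ d.+2 * #|block @: S| + b ^ d.+2 * 2 ^ b * (\sum_i Aproj i) * M ^ d.+1.
Proof.
pose W := [set B | [exists i, m <= #|residues i B|]].
have S_cover : S \subset \bigcup_(B in block @: S) fiber B.
  apply/subsetP => x xS; apply/bigcupP; exists (block x); first exact: imset_f.
  by rewrite inE xS eqxx.
apply: leq_trans (subset_leq_card S_cover) _; apply: leq_trans (card_bigcup_le _ _) _.
rewrite (big_setID W) /= addnC; apply: leq_add.
  apply: (@leq_trans (\sum_(B in block @: S :\: W) m.-1 ^ d.+2)).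
    apply: leq_sum => B; rewrite !inE negb_exists => /andP[/forallP narrow _].
    apply: leq_trans (card_fiber b_gt0 S B) _.
    rewrite -[X in _ <= _ ^ X](card_ord d.+2) -prod_nat_const; apply: leq_prod => i _.
    by rewrite -ltnS (leq_trans _ (leqSpred m)) // ltnNge.
  by rewrite sum_nat_const mulnC leq_mul2l subset_leq_card ?orbT // subsetDl.
apply: (@leq_trans (\sum_(B in block @: S :&: W) b ^ d.+2)).
  apply: leq_sum => B _; apply: leq_trans (card_fiber b_gt0 S B) _.
  rewrite -[X in _ <= _ ^ X](card_ord d.+2) -prod_nat_const.
  by apply: leq_prod => i _; rewrite (leq_trans (max_card _)) ?card_ord.
rewrite sum_nat_const mulnC.
apply: (@leq_trans (b ^ d.+2 * \sum_i 2 ^ b * Aproj i * M ^ d.+1)); last first.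
  by rewrite -big_distrl -big_distrr /= !mulnA.
rewrite leq_mul2l; apply/orP; right.
have W_cover : block @: S :&: W \subset
    \bigcup_i [set B in block @: S | m <= #|residues i B|].
  apply/subsetP => B; rewrite !inE => /andP[BS /existsP[i wB]].
  by apply/bigcupP; exists i; rewrite // inE BS.
apply: leq_trans (subset_leq_card W_cover) _; apply: leq_trans (card_bigcup_le _ _) _.
by apply: leq_sum => i _; apply: card_wide.
Qed.

End Blowup.

Lemma avoiding_set_widen (P : finType) m k n n' (s : 'I_k -> P -> 'I_m)
    (S : {set gridpt k n}) :
  n <= n' -> ~ contains_pattern S s ->
  exists2 S' : {set gridpt k n'}, #|S'| = #|S| & ~ contains_pattern S' s.
Proof.
move=> le_nn' avoid.
pose w (x : gridpt k n) : gridpt k n' := [ffun i => widen_ord le_nn' (x i)].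
have w_inj : injective w.
  move=> x y /ffunP e; apply/ffunP => i; apply: val_inj.
  by have := e i; rewrite !ffunE => -[].
exists (w @: S); first exact: card_imset.
by apply: contra_not avoid; apply: contains_pattern_imset => x y i; rewrite !ffunE.
Qed.

Lemma avoiding_bound_from_powers (P : finType) m d (s : 'I_d.+1 -> P -> 'I_m) b E :
  1 < b ->
  (forall t (S : {set gridpt d.+1 (b ^ t)}),
     ~ contains_pattern S s -> #|S| <= E * (b ^ t) ^ d) ->
  forall n (S : {set gridpt d.+1 n}), ~ contains_pattern S s -> #|S| <= E * b ^ d * n ^ d.
Proof.
move=> b_gt1 power_bound n S avoid; have [n0 | n_gt0] := posnP n.
  by apply: leq_trans (max_card _) _; rewrite card_ffun !card_ord n0 exp0n.
pose t := (trunc_log b n).+1.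
have n_le : n <= b ^ t by rewrite ltnW // trunc_log_ltn.
have [S' card_S' avoid'] := avoiding_set_widen n_le avoid.
have := power_bound t S' avoid'; rewrite card_S' => /leq_trans; apply.
rewrite -mulnA -expnMn leq_mul2l; have [d0 | d_gt0] := posnP d.
  by rewrite d0 !expn0 orbT.
by rewrite leq_exp2r // /t expnS leq_mul2l trunc_logP ?orbT.
Qed.

Theorem avoiding_set_bound (P : finType) m d (s : 'I_d.+1 -> P -> 'I_m) :
  exists A, forall n (S : {set gridpt d.+1 n}),
    ~ contains_pattern S s -> #|S| <= A * n ^ d.
Proof.
elim: d s => [|d IH] s.
  by exists m => n S /card_avoiding_line; rewrite expn0 muln1.
have /fin_all_exists[Aproj Aproj_bound] := fun i : 'I_d.+2 => IH (fun l => s (lift i l)).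
(* [b] is chosen so that [(m.-1) ^ d.+2 + 1 <= b ^ d.+1], which makes the
   bound of [card_blowup] reproduce itself at scale [b * M]. *)
pose b := ((m.-1) ^ d.+2).+2; have b_gt0 : 0 < b by [].
pose E := b ^ d.+2 * 2 ^ b * (\sum_i Aproj i).+1.
exists (E * b ^ d.+1); apply: avoiding_bound_from_powers => // t.
elim: t => [|t IHt] S avoid.
  rewrite exp1n muln1; apply: leq_trans (max_card _) _.
  by rewrite card_ffun !card_ord exp1n /E muln_gt0 muln_gt0 !expn_gt0.
move: S avoid; rewrite expnS => S avoid.
apply: leq_trans (card_blowup b_gt0 (fun i => Aproj_bound i _) avoid) _.
have := IHt _ (block_image_avoids (b_gt0 := b_gt0) avoid).
set M' := (b ^ t) ^ d.+1 => card_blocks.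
apply: (@leq_trans ((m.-1) ^ d.+2 * (E * M') + E * M')).
  apply: leq_add; first by rewrite leq_mul2l card_blocks orbT.
  by rewrite leq_mul2r /E leq_mul2l leqnSn !orbT.
rewrite addnC -mulSn expnMn -/M' [leqRHS]mulnCA leq_mul2r.
apply/orP; right; apply: leq_trans (leqnSn _) _.
by rewrite -[X in X <= _]expn1 leq_pexp2l.
Qed.

Section StandardExample.
Variable D : nat.

(* [inl i] and [inr i] play the roles of a_i and b_i. *)
Definition standard_example (l : 'I_D) (p : 'I_D + 'I_D) : 'I_4 :=
  inord (match p with
         | inl i => if i == l then 2 else 0
         | inr i => if i == l then 1 else 3
         end).

Lemma standard_exampleE l p : (standard_example l p : nat) =
  match p with inl i => if i == l then 2 else 0 | inr i => if i == l then 1 else 3 end.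
Proof. by rewrite inordK //; case: p => i; case: (i == l). Qed.

Lemma contains_standard_example n (S : {set gridpt D n}) :
  contains_pattern S standard_example ->
  exists a b : 'I_D -> gridpt D n, [/\ forall i, a i \in S, forall i, b i \in S,
    forall i j, i != j -> grid_le (a i) (b j) & forall i, ~~ grid_le (a i) (b i)].
Proof.
move=> [phi phiS phi_lt]; exists (phi \o inl), (phi \o inr).
split=> [i | i | i j ij | i] /=; [exact: phiS | exact: phiS | |].
  apply/forallP => l; apply/ltnW/phi_lt; rewrite !standard_exampleE.
  by case: (eqVneq i l) => [<- | _]; [rewrite eq_sym (negbTE ij) | case: (j == l)].
apply/negP => /forallP/(_ i); rewrite leqNgt => /negP; apply.
by apply: phi_lt; rewrite !standard_exampleE eqxx.
Qed.

End StandardExample.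

Lemma dim_le_standard_example k n (S : {set gridpt k n}) d D (a b : 'I_D -> gridpt k n) :
  (forall i, a i \in S) -> (forall i, b i \in S) ->
  (forall i j, i != j -> grid_le (a i) (b j)) -> (forall i, ~~ grid_le (a i) (b i)) ->
  dim_le S d -> D <= d.
Proof.
move=> aS bS ab nab [d' [le_d' [L [L_ext L_real]]]].
have /fin_all_exists[g g_rev] : forall i, exists j, L j (b i) (a i).
  move=> i; have : ~~ [forall j, L j (a i) (b i)].
    by apply: contra (nab i) => /forallP all_L; apply/(L_real _ _ (aS i) (bS i)).
  case/forallPn => j not_ab; exists j.
  case: (L_ext j) => _ _ _ L_total _.
  by move: (L_total _ _ (aS i) (bS i)); rewrite (negbTE not_ab).
suff g_inj : injective g.
  by have := leq_card g g_inj; rewrite !card_ord => /leq_trans; apply.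
move=> i1 i2 g12; apply: contraTeq isT => ne12.
case: (L_ext (g i1)) => _ L_anti L_trans _ L_grid.
have := g_rev i2; rewrite -g12 => rev2.
have ab12 := L_grid _ _ (aS i1) (bS i2) (ab _ _ ne12).
have ab21 : L (g i1) (a i2) (b i1) by apply: L_grid => //; apply: ab; rewrite eq_sym.
have aa12 := L_trans _ _ _ (aS i1) (bS i2) (aS i2) ab12 rev2.
have ab11 := L_trans _ _ _ (aS i1) (aS i2) (bS i1) aa12 ab21.
have e11 := L_anti _ _ (aS i1) (bS i1) ab11 (g_rev i1).
by have := nab i1; rewrite e11 => /forallPn[l]; rewrite leqnn.
Qed.

Theorem mainTheorem4 :
  forall d : nat, (0 < d)%N ->
  exists C : nat,
    forall n : nat, (0 < n)%N ->
    forall S : {set gridpt d.+1 n},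
      dim_le S d -> (#|S| <= C * n ^ d)%N.
Proof.
move=> d _; have [C C_bound] := avoiding_set_bound (@standard_example d.+1).
exists C => n _ S S_dim; apply: C_bound => /contains_standard_example[a [b [aS bS ab nab]]].
by have := dim_le_standard_example aS bS ab nab S_dim; rewrite ltnn.
Qed.
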